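(* Let $d_2,d_3\ge 2$ and $d_1=d_2d_3-1$. Then the SLOCC maximal states of $\mathbb{C}^{d_1}\otimes\mathbb{C}^{d_2}\otimes\mathbb{C}^{d_3}$ fall into exactly $\min\{d_2,d_3\}$ SLOCC equivalence classes.
   Context: $|\psi\rangle\le_{\mathrm{SLOCC}}|\phi\rangle$ means $(L_1\otimes L_2\otimes L_3)|\phi\rangle=|\psi\rangle$ for some linear operators $L_i$ on $\mathbb{C}^{d_i}$; two states are SLOCC equivalent if each is $\le_{\mathrm{SLOCC}}$ the other (equivalently, they are related by $L_1\otimes L_2\otimes L_3$ with all $L_i$ invertible). A state $|\phi\rangle$ is SLOCC maximal if for every $|\psi\rangle$ in the space, $|\phi\rangle\le_{\mathrm{SLOCC}}|\psi\rangle$ implies $|\psi\rangle\le_{\mathrm{SLOCC}}|\phi\rangle$. *)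

From HB Require Import structures.
From mathcomp Require Import all_boot all_order all_algebra.
Set Implicit Arguments. Unset Strict Implicit. Unset Printing Implicit Defensive.
Import Order.TTheory GRing.Theory Num.Theory.
Local Open Scope ring_scope.

Definition tensor3 (C : Type) (d1 d2 d3 : nat) :=
  {ffun 'I_d1 * 'I_d2 * 'I_d3 -> C}.

Definition slocc_act (C : numClosedFieldType) (d1 d2 d3 : nat)
  (L1 : 'M[C]_d1) (L2 : 'M[C]_d2) (L3 : 'M[C]_d3) (phi : tensor3 C d1 d2 d3)
  : tensor3 C d1 d2 d3 :=
  [ffun ijk : 'I_d1 * 'I_d2 * 'I_d3 =>
     \sum_(a < d1) \sum_(b < d2) \sum_(c < d3)
        L1 ijk.1.1 a * L2 ijk.1.2 b * L3 ijk.2 c * phi (a, b, c)].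

Definition slocc_le (C : numClosedFieldType) (d1 d2 d3 : nat)
  (psi phi : tensor3 C d1 d2 d3) : Prop :=
  exists (L1 : 'M[C]_d1) (L2 : 'M[C]_d2) (L3 : 'M[C]_d3),
    slocc_act L1 L2 L3 phi = psi.

Definition slocc_equiv (C : numClosedFieldType) (d1 d2 d3 : nat)
  (psi phi : tensor3 C d1 d2 d3) : Prop :=
  slocc_le psi phi /\ slocc_le phi psi.

Definition slocc_maximal (C : numClosedFieldType) (d1 d2 d3 : nat)
  (phi : tensor3 C d1 d2 d3) : Prop :=
  forall psi : tensor3 C d1 d2 d3, slocc_le phi psi -> slocc_le psi phi.

From HB Require Import structures.
From mathcomp Require Import all_boot all_order all_algebra.
Set Implicit Arguments. Unset Strict Implicit. Unset Printing Implicit Defensive.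
Import GRing.Theory.
Local Open Scope ring_scope.

(* A tensor phi is read through its d1 slices phi_a : 'M_(d2, d3); the action
   L1 (x) L2 (x) L3 replaces the slice span S(phi) by a subspace of
   L2 S(phi) L3^T, and the first party alone realises exactly the inclusions of
   slice spans.  Since d1 = d2 d3 - 1, the slice span is always contained in a
   hyperplane  H_A = {Y | <A, Y> = 0}  for some A != 0, where <A, Y> is the
   entrywise pairing [pr].  Writing A = P^T (pid_mx r) Q with P, Q invertible
   and r = rank A shows that every state lies below a "hyperplane state of
   type r", i.e. a state whose slice span is exactly H_(pid_mx r).  These
   states are SLOCC maximal: anything above them has a slice span containing
   H_r, which forces L2 and L3 to be invertible, and a slice span strictly
   larger than H_r would be the whole space, which has dimension d2 d3 > d1.
   Two types r1 <= r2 are comparable only if the annihilator of H_r1 is a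
   multiple of an invertible transform of pid_mx r2, so r1 = r2.  Hence the
   classes are indexed by r in 1 .. min(d2, d3). *)

Lemma mx_nonzero_entry (R : nzRingType) m n (M : 'M[R]_(m, n)) :
  M != 0 -> exists i j, M i j != 0.
Proof.
move=> nzM; have [/existsP[i /existsP[j Mij]] | ] := boolP [exists i, exists j, M i j != 0].
  by exists i, j.
rewrite negb_exists => /forallP allz; case/eqP: nzM; apply/matrixP => i j.
rewrite mxE; apply/eqP; apply: contraNT (allz i) => Mij.
by apply/existsP; exists j.
Qed.

Lemma left_kernel_vector (F : fieldType) m n (M : 'M[F]_(m, n)) :
  (\rank M < m)%N -> exists2 v : 'rV_m, v *m M = 0 & exists k, v 0 k != 0.
Proof.
move=> rkM; have : kermx M != 0 by rewrite -mxrank_eq0 mxrank_ker subn_eq0 -ltnNge.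
case/mx_nonzero_entry => i [k vk]; exists (row i (kermx M)).
  by apply/sub_kermxP; exact: row_sub.
by exists k; rewrite mxE.
Qed.

(* If every matrix unit delta_mx k l (for some l depending on k) lies in the
   image of left multiplication by M, then M is invertible: a left kernel
   vector v of M would have to satisfy v *m delta_mx k l = 0, i.e. v_k = 0. *)
Lemma unit_of_deltas (F : fieldType) m n (M : 'M[F]_m) :
  (forall k : 'I_m, exists (l : 'I_n) (X : 'M_(m, n)), delta_mx k l = M *m X) ->
  M \in unitmx.
Proof.
move=> hit; rewrite -row_free_unit; apply: contraT => notfree.
have : (\rank M < m)%N by rewrite ltn_neqAle notfree rank_leq_row.
case/left_kernel_vector => v vM [k vk]; have [l [X dkl]] := hit k.
have : v *m delta_mx k l *m (delta_mx l 0 : 'M_(n, 1)) = 0.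
  by rewrite dkl mulmxA vM !mul0mx.
rewrite -mulmxA mul_delta_mx -colE => /matrixP/(_ 0 0).
by rewrite !mxE => vk0; rewrite vk0 eqxx in vk.
Qed.

Lemma exists_ord_neq n (k : nat) : (2 <= n)%N -> exists l : 'I_n, k != l.
Proof.
move=> n_ge2; have [k0 | k_neq0] := eqVneq k 0%N.
  by exists (Ordinal n_ge2); rewrite k0.
by exists (Ordinal (ltnW n_ge2)).
Qed.

Lemma sandwich_sum (R : comNzRingType) m n p q k (M : 'M[R]_(m, n)) (N : 'M[R]_(p, q))
    (c : 'I_k -> R) (X : 'I_k -> 'M[R]_(n, p)) :
  M *m (\sum_a c a *: X a) *m N = \sum_a c a *: (M *m X a *m N).
Proof.
rewrite mulmx_sumr mulmx_suml; apply: eq_bigr => a _.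
by rewrite -scalemxAr -scalemxAl.
Qed.

Section Pairing.
Variable R : comNzRingType.
Variables m n : nat.
Implicit Types A Y Z : 'M[R]_(m, n).

Definition pr A Y : R := \sum_i \sum_j A i j * Y i j.

Lemma pr_trace A Y : pr A Y = \tr (Y *m A^T).
Proof.
rewrite /pr /mxtrace; apply: eq_bigr => i _; rewrite mxE.
by apply: eq_bigr => j _; rewrite !mxE mulrC.
Qed.

Lemma pr_mul A (P : 'M[R]_m) X (Q : 'M[R]_n) : pr A (P *m X *m Q) = pr (P^T *m A *m Q^T) X.
Proof.
rewrite !pr_trace mxtrace_mulC !mulmxA mxtrace_mulC !mulmxA !trmx_mul !trmxK.
by rewrite mxtrace_mulC !mulmxA.
Qed.

Lemma pr_sum k A (c : 'I_k -> R) (Y : 'I_k -> 'M[R]_(m, n)) :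
  pr A (\sum_a c a *: Y a) = \sum_a c a * pr A (Y a).
Proof.
rewrite pr_trace mulmx_suml raddf_sum; apply: eq_bigr => a _.
by rewrite -scalemxAl pr_trace; exact: mxtraceZ.
Qed.

Lemma pr_subZ A Y Z c : pr A (Y - c *: Z) = pr A Y - c * pr A Z.
Proof. by rewrite !pr_trace mulmxDl mxtraceD -scaleNr -scalemxAl mxtraceZ mulNr. Qed.

Lemma pr_delta A k l : pr A (delta_mx k l) = A k l.
Proof.
rewrite /pr (bigD1 k) //= [X in _ + X]big1 => [|i /negPf ik]; last first.
  by apply: big1 => j _; rewrite mxE ik mulr0.
rewrite addr0 (bigD1 l) //= [X in _ + X]big1 => [|j /negPf jl]; last first.
  by rewrite mxE jl andbF mulr0.
by rewrite mxE !eqxx mulr1 addr0.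
Qed.

Lemma pr_mxvec A Y : mxvec Y *m (mxvec A)^T = (pr A Y)%:M.
Proof.
apply/rowP => i; rewrite {i}ord1 !mxE (reindex _ (curry_mxvec_bij _ _)) /=.
rewrite mulr1n /pr pair_bigA /=; apply: eq_bigr => [[i j]] _ /=.
by rewrite !mxE !mxvecE mulrC.
Qed.

Lemma pr_pid_offdiag r (k : 'I_m) (l : 'I_n) :
  k != l :> nat -> pr (pid_mx r) (delta_mx k l) = 0.
Proof. by move=> /negPf kl; rewrite pr_delta mxE kl. Qed.

End Pairing.

Section PairingField.
Variable F : fieldType.
Variables m n : nat.
Implicit Types A B Y Z : 'M[F]_(m, n).

Lemma pr_sandwich_inv A (P : 'M[F]_m) (Q : 'M[F]_n) X :
  P \in unitmx -> Q \in unitmx ->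
  pr ((invmx P)^T *m A *m invmx Q) (P *m X *m Q^T) = pr A X.
Proof.
move=> uP uQ; rewrite pr_mul trmxK !mulmxA -trmx_mul mulVmx // trmx1 mul1mx.
by rewrite -mulmxA mulVmx // mulmx1.
Qed.

Lemma annihilator_of_pid r B : (0 < r)%N -> (0 < m)%N -> (0 < n)%N ->
  (forall Y, pr (pid_mx r) Y = 0 -> pr B Y = 0) -> exists c, B = c *: pid_mx r.
Proof.
move=> r_gt0 m_gt0 n_gt0 annB; pose i0 := Ordinal m_gt0; pose j0 := Ordinal n_gt0.
exists (B i0 j0); apply/matrixP => k l; rewrite !mxE.
case kl: (_ && _).
  have := annB (delta_mx k l - 1 *: delta_mx i0 j0).
  rewrite !pr_subZ !pr_delta !mxE kl r_gt0 /= !mul1r subrr => /(_ erefl) /eqP.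
  by rewrite subr_eq0 => /eqP ->; rewrite mulr1.
by have := annB (delta_mx k l); rewrite !pr_delta mxE kl mulr0 => ->.
Qed.

Lemma hyperplane_extension_full k A (S : 'M[F]_(k, m * n)) Y0 :
  (forall Y, pr A Y = 0 -> (mxvec Y <= S)%MS) ->
  (mxvec Y0 <= S)%MS -> pr A Y0 != 0 -> forall Z, (mxvec Z <= S)%MS.
Proof.
move=> hypS Y0S nzY0 Z; pose t := pr A Z / pr A Y0.
have -> : Z = (Z - t *: Y0) + t *: Y0 by rewrite subrK.
rewrite linearD /=; apply: addmx_sub; last by rewrite linearZ; exact: scalemx_sub.
by apply: hypS; rewrite pr_subZ divfK // subrr.
Qed.

End PairingField.

Section Slices.
Variable C : numClosedFieldType.
Variables d1 d2 d3 : nat.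
Implicit Types (phi psi : tensor3 C d1 d2 d3).

(* The slice phi_a = phi(a, -, -) and the matrix whose rows are the
   vectorised slices; the row space of [slice_mx phi] is the slice span. *)
Definition slice phi (a : 'I_d1) : 'M[C]_(d2, d3) := \matrix_(k, l) phi (a, k, l).

Definition slice_mx phi : 'M[C]_(d1, d2 * d3) := \matrix_(a, x) mxvec (slice phi a) 0 x.

Definition tensor_of_rows (M : 'M[C]_(d1, d2 * d3)) : tensor3 C d1 d2 d3 :=
  [ffun abc => M abc.1.1 (mxvec_index abc.1.2 abc.2)].

Lemma row_slice_mx phi a : row a (slice_mx phi) = mxvec (slice phi a).
Proof. by apply/rowP => x; rewrite !mxE. Qed.

Lemma slice_mx_of_rows M : slice_mx (tensor_of_rows M) = M.
Proof.
apply/matrixP => a x; rewrite mxE; case/mxvec_indexP: x => k l.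
by rewrite mxvecE mxE ffunE.
Qed.

Lemma slice_inj phi psi : (forall a, slice phi a = slice psi a) -> phi = psi.
Proof.
move=> eq_slices; apply/ffunP => [[[a k] l]].
by have /matrixP/(_ k l) := eq_slices a; rewrite !mxE.
Qed.

Lemma slice_act L1 L2 L3 phi a :
  slice (slocc_act L1 L2 L3 phi) a = \sum_b L1 a b *: (L2 *m slice phi b *m L3^T).
Proof.
apply/matrixP => k l; rewrite !mxE ffunE /= summxE.
apply: eq_bigr => b _; rewrite !mxE big_distrr /=.
rewrite exchange_big /=; apply: eq_bigr => c _.
rewrite !mxE big_distrl big_distrr /=; apply: eq_bigr => e _.
by rewrite !mxE -!mulrA [phi _ * _]mulrC.
Qed.

Lemma slice_act_local L2 L3 phi b :
  slice (slocc_act 1%:M L2 L3 phi) b = L2 *m slice phi b *m L3^T.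
Proof.
rewrite slice_act (bigD1 b) //= big1 => [|a /negPf ab]; last first.
  by rewrite mxE eq_sym ab mulr0n scale0r.
by rewrite mxE eqxx mulr1n scale1r addr0.
Qed.

Lemma slocc_act_comp L1 L2 L3 M1 M2 M3 phi :
  slocc_act L1 L2 L3 (slocc_act M1 M2 M3 phi) =
  slocc_act (L1 *m M1) (L2 *m M2) (L3 *m M3) phi.
Proof.
apply: slice_inj => a; rewrite !slice_act.
under eq_bigr => b _ do rewrite slice_act sandwich_sum scaler_sumr.
rewrite exchange_big /=; apply: eq_bigr => c _.
rewrite mxE scaler_suml trmx_mul; apply: eq_bigr => b _.
by rewrite scalerA !mulmxA.
Qed.

Lemma slocc_act1 phi : slocc_act 1%:M 1%:M 1%:M phi = phi.
Proof.
by apply: slice_inj => a; rewrite slice_act_local trmx1 mul1mx mulmx1.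
Qed.

Lemma slocc_le_trans phi psi chi :
  slocc_le phi psi -> slocc_le psi chi -> slocc_le phi chi.
Proof.
move=> [L1 [L2 [L3 <-]]] [M1 [M2 [M3 <-]]].
by exists (L1 *m M1), (L2 *m M2), (L3 *m M3); rewrite slocc_act_comp.
Qed.

Lemma span_mem_comb Y phi :
  (mxvec Y <= slice_mx phi)%MS -> exists c : 'I_d1 -> C, Y = \sum_a c a *: slice phi a.
Proof.
case/submxP => D YD; exists (fun a => D 0 a); apply: (can_inj mxvecK).
rewrite YD mulmx_sum_row linear_sum; apply: eq_bigr => a _.
by rewrite row_slice_mx linearZ.
Qed.

Lemma span_sub_party1 psi phi :
  (slice_mx psi <= slice_mx phi)%MS <-> exists L1, psi = slocc_act L1 1%:M 1%:M phi.
Proof.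
have slice_act1 L1 a : slice (slocc_act L1 1%:M 1%:M phi) a = \sum_b L1 a b *: slice phi b.
  by rewrite slice_act; apply: eq_bigr => b _; rewrite trmx1 mul1mx mulmx1.
split=> [/submxP [L1 psiL1] | [L1 ->]]; last first.
  apply/row_subP => a; rewrite row_slice_mx slice_act1 linear_sum.
  apply: summx_sub => b _; rewrite linearZ /= -row_slice_mx.
  exact/scalemx_sub/row_sub.
exists L1; apply: slice_inj => a; apply: (can_inj mxvecK).
rewrite -row_slice_mx psiL1 row_mul mulmx_sum_row slice_act1 linear_sum.
by apply: eq_bigr => b _; rewrite row_slice_mx linearZ mxE.
Qed.

Lemma span_act_sub_local L1 L2 L3 phi :
  (slice_mx (slocc_act L1 L2 L3 phi) <= slice_mx (slocc_act 1%:M L2 L3 phi))%MS.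
Proof.
apply/span_sub_party1; exists L1.
by rewrite slocc_act_comp mulmx1 !mul1mx.
Qed.

Lemma le_local_unit L2 L3 phi : L2 \in unitmx -> L3 \in unitmx ->
  slocc_le phi (slocc_act 1%:M L2 L3 phi).
Proof.
move=> uL2 uL3; exists 1%:M, (invmx L2), (invmx L3).
by rewrite slocc_act_comp mul1mx !mulVmx // slocc_act1.
Qed.

Lemma tensor_with_span k (S : 'M[C]_(k, d2 * d3)) :
  \rank S = d1 -> exists phi, (slice_mx phi :=: S)%MS.
Proof.
move=> rkS; exists (tensor_of_rows (castmx (rkS, erefl) (row_base S))).
by rewrite slice_mx_of_rows; apply: eqmx_trans (eqmx_cast _ _) (eq_row_base S).
Qed.

Lemma slice_span_not_full phi :
  (d1 < d2 * d3)%N -> ~ (forall Z, (mxvec Z <= slice_mx phi)%MS).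
Proof.
move=> d1_lt full; have : (1%:M <= slice_mx phi)%MS.
  by apply/row_subP => i; rewrite -(vec_mxK (row i 1%:M)).
move/mxrankS; rewrite mxrank1 => /leq_trans/(_ (rank_leq_row _)).
by rewrite leqNgt d1_lt.
Qed.

Lemma slice_annihilator phi : (d1 < d2 * d3)%N ->
  exists2 A : 'M[C]_(d2, d3), A != 0 & forall a, pr A (slice phi a) = 0.
Proof.
move=> d1_lt; have : (\rank (slice_mx phi)^T < d2 * d3)%N.
  by rewrite mxrank_tr (leq_ltn_trans (rank_leq_row _)).
case/left_kernel_vector => v vS [k vk]; exists (vec_mx v).
  by apply: contraNneq vk => /(congr1 mxvec); rewrite vec_mxK linear0 => ->; rewrite mxE.
move=> a; have : slice_mx phi *m v^T = 0 by rewrite -[slice_mx phi]trmxK -trmx_mul vS trmx0.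
move/(congr1 (row a)); rewrite row_mul row_slice_mx -[v]vec_mxK pr_mxvec row0 vec_mxK.
by move/matrixP/(_ 0 0); rewrite !mxE mulr1n.
Qed.

Lemma span_act_factor L1 L2 L3 psi Y :
  (mxvec Y <= slice_mx (slocc_act L1 L2 L3 psi))%MS -> exists X, Y = L2 *m X *m L3^T.
Proof.
move/submx_trans/(_ (span_act_sub_local L1 L2 L3 psi))/span_mem_comb => [c ->].
exists (\sum_a c a *: slice psi a); rewrite sandwich_sum.
by apply: eq_bigr => a _; rewrite slice_act_local.
Qed.

End Slices.

Section HyperplaneStates.
Variable C : numClosedFieldType.
Variables d1 d2 d3 : nat.
Hypothesis d2_ge2 : (2 <= d2)%N.
Hypothesis d3_ge2 : (2 <= d3)%N.
Hypothesis d1_def : d1 = (d2 * d3 - 1)%N.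
Implicit Types (phi psi : tensor3 C d1 d2 d3).

Let d2_gt0 : (0 < d2)%N := ltnW d2_ge2.
Let d3_gt0 : (0 < d3)%N := ltnW d3_ge2.
Let d1_lt : (d1 < d2 * d3)%N.
Proof. by rewrite d1_def subn1 prednK // muln_gt0 d2_gt0. Qed.

Definition hyperplane_state r phi : Prop :=
  forall Y, (mxvec Y <= slice_mx phi)%MS = (pr (pid_mx r) Y == 0).

(* Hyperplane states of every type r > 0 exist, since the hyperplane has
   dimension d2 d3 - 1 = d1. *)
Lemma hyperplane_state_exists r : (0 < r)%N -> exists phi, hyperplane_state r phi.
Proof.
move=> r_gt0; pose B : 'cV[C]_(d2 * d3) := (mxvec (pid_mx r : 'M_(d2, d3)))^T.
have memB Y : (mxvec Y <= kermx B)%MS = (pr (pid_mx r) Y == 0).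
  rewrite sub_kermx pr_mxvec; apply/eqP/eqP => [/matrixP/(_ 0 0) | ->].
    by rewrite !mxE mulr1n.
  by apply/matrixP => i j; rewrite !mxE mul0rn.
have rkB : \rank B = 1%N.
  apply/eqP; rewrite eqn_leq rank_leq_col lt0n mxrank_eq0.
  apply/eqP => /matrixP/(_ (mxvec_index (Ordinal d2_gt0) (Ordinal d3_gt0)) 0).
  by rewrite !mxE mxvecE mxE /= r_gt0 mulr1n; apply/eqP; exact: oner_neq0.
have [phi span_phi] : exists phi, (slice_mx phi :=: kermx B)%MS.
  by apply: tensor_with_span; rewrite mxrank_ker rkB d1_def.
by exists phi => Y; rewrite span_phi memB.
Qed.

Lemma hyperplane_state_slice r phi a :
  hyperplane_state r phi -> pr (pid_mx r) (slice phi a) = 0.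
Proof. by move=> hphi; apply/eqP; rewrite -hphi -row_slice_mx row_sub. Qed.

(* If a hyperplane of type r lies in the slice span of (L1 (x) L2 (x) L3) psi
   then L2 and L3 are invertible: the hyperplane contains an off-diagonal
   matrix unit in every row and every column. *)
Lemma local_ops_unit r L1 L2 L3 psi :
  (forall Y, pr (pid_mx r) Y = 0 -> (mxvec Y <= slice_mx (slocc_act L1 L2 L3 psi))%MS) ->
  L2 \in unitmx /\ L3 \in unitmx.
Proof.
move=> hyp_sub; split; apply: unit_of_deltas => k.
- have [l kl] := exists_ord_neq k d3_ge2.
  have [X dX] := span_act_factor (hyp_sub _ (pr_pid_offdiag _ r kl)).
  by exists l, (X *m L3^T); rewrite dX mulmxA.
- have [l lk] := exists_ord_neq k d2_ge2; rewrite eq_sym in lk.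
  have [X dX] := span_act_factor (hyp_sub _ (pr_pid_offdiag _ r lk)).
  by exists l, (X^T *m L2^T); rewrite -trmx_delta dX !trmx_mul trmxK mulmxA.
Qed.

Lemma le_hyperplane_state r phi psi L2 L3 :
  hyperplane_state r phi -> L2 \in unitmx -> L3 \in unitmx ->
  (forall b, pr (pid_mx r) (L2 *m slice psi b *m L3^T) = 0) -> slocc_le psi phi.
Proof.
move=> hphi uL2 uL3 ann; apply: slocc_le_trans (le_local_unit psi uL2 uL3) _.
have /span_sub_party1 [L1 ->] : (slice_mx (slocc_act 1%:M L2 L3 psi) <= slice_mx phi)%MS.
  by apply/row_subP => b; rewrite row_slice_mx hphi slice_act_local ann.
by exists L1, 1%:M, 1%:M.
Qed.

Lemma hyperplane_state_maximal r phi : hyperplane_state r phi -> slocc_maximal phi.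
Proof.
move=> hphi psi [L1 [L2 [L3 act_psi]]]; set psi' := slocc_act 1%:M L2 L3 psi.
have [uL2 uL3] : L2 \in unitmx /\ L3 \in unitmx.
  by apply: (@local_ops_unit r L1 L2 L3 psi) => Y /eqP; rewrite -hphi act_psi.
have hyp_sub Y : pr (pid_mx r) Y = 0 -> (mxvec Y <= slice_mx psi')%MS.
  move=> /eqP; rewrite -hphi -act_psi => Yin.
  exact: submx_trans Yin (span_act_sub_local L1 L2 L3 psi).
apply: (le_hyperplane_state hphi uL2 uL3) => b; apply/eqP; apply: contraT => nz.
case: (slice_span_not_full (phi := psi') d1_lt).
apply: (hyperplane_extension_full hyp_sub _ nz).
by rewrite -slice_act_local -row_slice_mx row_sub.
Qed.

Lemma hyperplane_state_unique r1 r2 phi1 phi2 :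
  (0 < r1 <= minn d2 d3)%N -> (0 < r2 <= minn d2 d3)%N ->
  hyperplane_state r1 phi1 -> hyperplane_state r2 phi2 -> slocc_le phi1 phi2 -> r1 = r2.
Proof.
rewrite !leq_min => /and3P[r1_gt0 r1_d2 r1_d3] /and3P[r2_gt0 r2_d2 r2_d3] h1 h2.
move=> [L1 [L2 [L3 act12]]].
have [uL2 uL3] : L2 \in unitmx /\ L3 \in unitmx.
  by apply: (@local_ops_unit r1 L1 L2 L3 phi2) => Y /eqP; rewrite -h1 act12.
pose B := (invmx L2)^T *m pid_mx r2 *m invmx L3.
have annB Y : pr (pid_mx r1) Y = 0 -> pr B Y = 0.
  move=> /eqP; rewrite -h1 -act12 => /submx_trans/(_ (span_act_sub_local _ _ _ _)).
  case/span_mem_comb => c ->; rewrite pr_sum big1 // => b _.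
  by rewrite slice_act_local pr_sandwich_inv // (hyperplane_state_slice _ h2) mulr0.
have rkB : \rank B = r2.
  rewrite mxrankMfree ?row_free_unit ?unitmx_inv //.
  rewrite (eqmxMfull _ (_ : row_full _)) ?row_full_unit ?unitmx_tr ?unitmx_inv //.
  exact: rank_pid_mx.
have [c Bc] := annihilator_of_pid r1_gt0 d2_gt0 d3_gt0 annB.
have [c0 | nz_c] := eqVneq c 0.
  by move: r2_gt0; rewrite -rkB Bc c0 scale0r mxrank0.
by rewrite -rkB Bc mxrank_scale_nz // rank_pid_mx.
Qed.

(* A maximal state is equivalent to the hyperplane states of type
   rank A, where A is a nonzero annihilator of its slice span. *)
Lemma maximal_classify phi : slocc_maximal phi ->
  exists2 r, (0 < r <= minn d2 d3)%N &
    forall psi, hyperplane_state r psi -> slocc_equiv phi psi.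
Proof.
move=> max_phi; have [A nzA annA] := slice_annihilator phi d1_lt.
exists (\rank A); first by rewrite lt0n mxrank_eq0 nzA leq_min rank_leq_row rank_leq_col.
move=> psi hpsi; have le_phi_psi : slocc_le phi psi.
  have uP : (col_ebase A)^T \in unitmx by rewrite unitmx_tr col_ebase_unit.
  apply: (le_hyperplane_state hpsi uP (row_ebase_unit A)) => b.
  by rewrite pr_mul !trmxK mulmx_ebase annA.
by split=> //; exact: max_phi.
Qed.

End HyperplaneStates.

Theorem mainTheorem6 (C : numClosedFieldType) (d1 d2 d3 : nat) :
  (2 <= d2)%N -> (2 <= d3)%N -> d1 = (d2 * d3 - 1)%N ->
  exists reps : 'I_(minn d2 d3) -> tensor3 C d1 d2 d3,
    (forall i, slocc_maximal (reps i)) /\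
    (forall i j, slocc_equiv (reps i) (reps j) -> i = j) /\
    (forall phi : tensor3 C d1 d2 d3, slocc_maximal phi ->
       exists i, slocc_equiv phi (reps i)).
Proof.
move=> d2_ge2 d3_ge2 d1_def.
have [reps reps_state] := fin_all_exists (fun i : 'I_(minn d2 d3) =>
  hyperplane_state_exists C d2_ge2 d3_ge2 d1_def (ltn0Sn i)).
exists reps; split; [|split].
- by move=> i; exact: hyperplane_state_maximal (reps_state i).
- move=> i j [le_ij _]; apply: val_inj; apply: succn_inj.
  apply: (hyperplane_state_unique d2_ge2 d3_ge2 _ _ (reps_state i) (reps_state j) le_ij);
    exact: ltn_ord.
- move=> phi max_phi.
  have [r r_range equiv_r] := maximal_classify d2_ge2 d3_ge2 d1_def max_phi.
  case: r r_range equiv_r => [|r] // r_range equiv_r.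
  by exists (Ordinal r_range); apply: equiv_r; exact: reps_state.
Qed.
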